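(* Let $G$ be a finite solvable group and suppose given integers $n(H,\phi)$ for all pairs $(H,\phi)$ with $H$ a subgroup of $G$ and $\phi$ a character of $H$, satisfying: (ACH1) $n(H,\phi_1+\phi_2)=n(H,\phi_1)+n(H,\phi_2)$ for all characters $\phi_1,\phi_2$ of $H$; (ACH2) $n(G,\mathrm{Ind}_H^G\phi)=n(H,\phi)$ for every subgroup $H$ and every character $\phi$ of $H$; (ACH3) $n(H,\phi)\ge0$ for every subgroup $H$ and every one-dimensional character $\phi$ of $H$. Let $H$ be a subgroup of $G$, $\chi$ a one-dimensional character of $G$ and $\phi$ a one-dimensional character of $H$. Then \[n(G,\mathrm{Ind}_H^G\phi)\ge(\chi|_H,\phi)\,n(G,\chi).\]
   Context: $(\cdot,\cdot)$ is the standard inner product of class functions, $(f_1,f_2)=\frac1{|H|}\sum_{h\in H}f_1(h)\overline{f_2(h)}$. $\mathrm{Ind}_H^G$ denotes induction of characters; a one-dimensional character is a character of degree $1$. *)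

From HB Require Import structures.
From mathcomp Require Import all_boot all_order all_algebra all_fingroup all_solvable all_field all_character.
Set Implicit Arguments. Unset Strict Implicit. Unset Printing Implicit Defensive.

From mathcomp Require Import all_boot all_order all_algebra all_fingroup all_solvable all_field all_character.

(* Climbing a chain of maximal subgroups from H to G and using (ACH2), it suffices
   to show n(K, c) <= n(K, Ind_M^K Res_M c) for c linear on K and M maximal in K.
   Now Ind_M^K Res_M c = (Ind_M^K 1) c is c plus a sum of products chi c over the
   other irreducible constituents chi of Ind_M^K 1.  In a solvable group, M has a
   normal supplement A with A' <= M, and Clifford theory over A shows that each
   such chi is induced from a linear character; hence so is chi c, and
   n(K, chi c) >= 0 by (ACH2) and (ACH3).  When Res_H chi <> phi the left-hand
   side of the theorem vanishes and n(G, Ind phi) = n(H, phi) >= 0. *)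

Set Implicit Arguments.
Unset Strict Implicit.
Unset Printing Implicit Defensive.
Import Order.TTheory GRing.Theory Num.Theory.
Local Open Scope ring_scope.

Lemma cfRes_Ind_cfun1_supplement (gT : finGroupType) (K A M : {group gT}) :
    (A <| K)%g -> (A :&: M <| K)%g -> (A * M)%g = K ->
  'Res[A] ('Ind[K] (1 : 'CF(M))) = 'Ind[A] (1 : 'CF(A :&: M)).
Proof.
move=> nsAK nsBK defK; have sAK := normal_sub nsAK.
have nsBA : (A :&: M <| A)%g := normalS (subsetIl A M) sAK nsBK.
have sMK : M \subset K by rewrite -defK mulG_subr.
apply/cfun_inP=> a Aa; rewrite cfResE // cfIndE // (cfInd_cfun1 nsBA) cfunE cfuniE //.
have inM_conj y : y \in K -> (a ^ y \in M)%g = (a \in A :&: M).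
  move=> Ky; rewrite -(memJ_norm a (subsetP (normal_norm nsBK) y Ky)) inE.
  by rewrite (memJ_norm a (subsetP (normal_norm nsAK) y Ky)) Aa.
under eq_bigr => y Ky do rewrite cfun1E inM_conj //.
rewrite sumr_const natf_indexg ?subsetIl // -[_ *+ #|K|]mulr_natl mulrA.
congr (_ * _).
apply/eqP; rewrite mulrC eqr_div ?pnatr_eq0 -?lt0n ?cardG_gt0 // -!natrM eqr_nat.
by rewrite -defK -(mul_cardG A M).
Qed.

Lemma cfdot_Ind_cfun1_der1 (gT : finGroupType) (A B : {group gT}) (j : Iirr A) :
    B \subset A -> A^`(1)%g \subset B ->
    '['Ind[A] (1 : 'CF(B)), 'chi_j] != 0 ->
  'chi_j \is a linear_char /\ '['Ind[A] (1 : 'CF(B)), 'chi_j] = 1.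
Proof.
move=> sBA sA'B; rewrite -Frobenius_reciprocity => nz_j.
have nsBA : (B <| A)%g := sub_der1_normal sA'B sBA.
have kerB : B \subset cfker 'chi_j.
  by apply: constt0_Res_cfker nsBA _; rewrite irr_consttE irr0 cfdotC conjC_eq0.
have lin_j : 'chi_j \is a linear_char by rewrite lin_irr_der1 (subset_trans sA'B).
by rewrite cfRes_sub_ker // lin_char1 // scale1r cfnorm1.
Qed.

Lemma Ind_Inertia_linear_of_Res_mult1 (gT : finGroupType) (K A : {group gT})
    (t : Iirr A) (r : Iirr K) :
    (A <| K)%g -> 'chi_t \is a linear_char -> '['Res[A] 'chi_r, 'chi_t] = 1 ->
  exists2 eta : 'CF('I_K['chi_t]), eta \is a linear_char & 'chi_r = 'Ind[K] eta.
Proof.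
move=> nsAK lin_t mult1.
have [constt_Ind_s _ im_Ind _ Res_s] := constt_Inertia_bijection t nsAK.
have : r \in irr_constt ('Ind[K] 'chi_t).
  by rewrite constt_Ind_Res irr_consttE mult1 oner_neq0.
rewrite -im_Ind => /imsetP[s s_constt def_r]; rewrite {r}def_r in mult1 *.
rewrite /Ind_Iirr cfIirrE ?constt_Ind_s // in mult1 *.
exists 'chi_s => //.
have nsAT := normal_Inertia 'chi_t (normal_sub nsAK).
have t_constt : t \in irr_constt ('Res[A] 'chi_s) by rewrite -constt_Ind_Res.
have := Clifford_Res_sum_cfclass nsAT t_constt.
have /= mult_s := Res_s s s_constt; rewrite -mult_s in mult1.
rewrite cfclass_invariant ?subsetIr // big_seq1 mult1 scale1r => Res_s_eq.
by rewrite qualifE /= irr_char /= -(cfRes1 A) Res_s_eq lin_char1.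
Qed.

Section MaximalSubgroupOfSolvable.

Variables (gT : finGroupType) (K M : {group gT}).
Hypotheses (solK : solvable K) (maxM : maximal M K).

Lemma solvable_maximal_normal_supplement :
  exists A : {group gT}, [/\ A <| K, A^`(1) \subset M & A * M = K]%g.
Proof.
have [prMK maxM'] := maxgroupP maxM; have sMK := proper_sub prMK.
pose P := [pred X : {group gT} | (X <| K)%g && ~~ (X \subset M)].
have PK : P K by rewrite /= normal_refl; case/andP: prMK.
have [A /mingroupP[/andP[nsAK not_sAM] minA] _] := mingroup_exists PK.
have sAK := normal_sub nsAK.
exists A; split=> //.
  apply: contraR (not_sAM) => not_sA'M.
  have PA' : P A^`(1)%G by rewrite /= not_sA'M andbT (char_normal_trans (der_char 1 A)).
  have ntA : A :!=: 1%g by apply: contraNneq not_sAM => ->; apply: sub1G.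
  have := sol_der1_proper (solvableS sAK solK) (subxx A) ntA.
  by rewrite (minA _ PA' (der_sub 1 A)) properxx.
have nAM : M \subset 'N(A)%g := subset_trans sMK (normal_norm nsAK).
rewrite -norm_joinEr //; apply/eqP; rewrite eqEsubset join_subG sAK sMK /=.
apply: contraR (not_sAM) => not_sKAM.
have prAM_K : (A <*> M)%G \proper K by rewrite properE join_subG sAK sMK.
by rewrite -(maxM' _ prAM_K (joing_subr _ _)) joing_subl.
Qed.

Lemma cfInd_cfun1_constt_monomial (i : Iirr K) :
    i \in irr_constt ('Ind[K] (1 : 'CF(M))) ->
  exists2 T : {group gT}, T \subset K &
    exists2 eta : 'CF(T), eta \is a linear_char & 'chi_i = 'Ind[K] eta.
Proof.
move=> i_constt; have sMK := proper_sub (maxgroupp maxM).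
have [A [nsAK sA'M defK]] := solvable_maximal_normal_supplement.
have sA'B : A^`(1)%g \subset A :&: M by rewrite subsetI der_sub.
have nsBA : (A :&: M <| A)%g := sub_der1_normal sA'B (subsetIl A M).
have nsBK : (A :&: M <| K)%g.
  rewrite /normal (subset_trans (subsetIl A M) (normal_sub nsAK)) /=.
  rewrite -defK mulG_subG (normal_norm nsBA) normsI ?normG //.
  exact: subset_trans sMK (normal_norm nsAK).
(* [Res_A (Ind_M^K 1) = Ind_(A :&: M)^A 1] has only linear constituents, each of
   multiplicity one, so some linear [chi_t] occurs exactly once in [Res_A chi_i]. *)
have Res_pi := cfRes_Ind_cfun1_supplement nsAK nsBK defK.
have N_pi : 'Ind[K] (1 : 'CF(M)) \is a character by rewrite cfInd_char ?cfun1_char.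
have [psi N_psi def_pi] := constt_charP i N_pi i_constt.
have [t t_constt] := constt_cfRes_irr A i.
have [k def_k] := natrP (Cnat_cfdot_char_irr t (cfRes_char A (irr_char i))).
have [l def_l] := natrP (Cnat_cfdot_char_irr t (cfRes_char A N_psi)).
have k_gt0 : (0 < k)%N by rewrite lt0n -(pnatr_eq0 algC) -def_k.
have mult_pi : '['Ind[A] (1 : 'CF(A :&: M)), 'chi_t] = (k + l)%:R.
  by rewrite -Res_pi def_pi raddfD cfdotDl def_k def_l natrD.
have nz_t : '['Ind[A] (1 : 'CF(A :&: M)), 'chi_t] != 0.
  by rewrite mult_pi pnatr_eq0 addn_eq0 negb_and -lt0n k_gt0.
have [lin_t mult1_pi] := cfdot_Ind_cfun1_der1 (subsetIl A M) sA'B nz_t.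
have k1 : k = 1%N.
  move/eqP: mult1_pi; rewrite mult_pi pnatr_eq1 eqn_leq => /andP[kl_le1 _].
  by apply/eqP; rewrite eqn_leq k_gt0 (leq_trans (leq_addr l k) kl_le1).
have mult1_i : '['Res[A] 'chi_i, 'chi_t] = 1 by rewrite def_k k1.
have [eta lin_eta def_i] := Ind_Inertia_linear_of_Res_mult1 nsAK lin_t mult1_i.
by exists ('I_K['chi_t])%G; [apply: Inertia_sub | exists eta].
Qed.

End MaximalSubgroupOfSolvable.

Section InductionCompatibleFunctional.

Variables (gT : finGroupType) (G : {group gT}).
Variable n : forall H : {group gT}, 'CF(H) -> int.
Arguments n : clear implicits.
Hypothesis solG : solvable G.
Hypothesis nD : forall H : {group gT}, H \subset G ->
  forall phi1 phi2 : 'CF(H), phi1 \is a character -> phi2 \is a character ->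
  n H (phi1 + phi2) = n H phi1 + n H phi2.
Hypothesis n_IndG : forall H : {group gT}, H \subset G ->
  forall phi : 'CF(H), phi \is a character -> n G ('Ind[G] phi) = n H phi.
Hypothesis n_lin_ge0 : forall H : {group gT}, H \subset G ->
  forall phi : 'CF(H), phi \is a linear_char -> 0 <= n H phi.

Lemma n_cfInd (K L : {group gT}) (phi : 'CF(L)) :
  K \subset G -> L \subset K -> phi \is a character -> n K ('Ind[K] phi) = n L phi.
Proof.
move=> sKG sLK N_phi; rewrite -(n_IndG sKG) ?cfInd_char // (cfIndInd _ sKG sLK).
by rewrite n_IndG // (subset_trans sLK sKG).
Qed.

Lemma n_cfun0 (K : {group gT}) : K \subset G -> n K 0 = 0.
Proof.
move=> sKG; apply: (addrI (n K 0)).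
by rewrite -nD ?rpred0 // !addr0.
Qed.

Lemma n_natmul (K : {group gT}) (phi : 'CF(K)) (k : nat) :
  K \subset G -> phi \is a character -> n K (phi *+ k) = n K phi *+ k.
Proof.
move=> sKG N_phi; elim: k => [|k IHk]; first by rewrite !mulr0n n_cfun0.
by rewrite !mulrS nD ?rpredMn // IHk.
Qed.

Lemma n_sum (K : {group gT}) (I : finType) (P : pred I) (phi : I -> 'CF(K)) :
    K \subset G -> (forall i, P i -> phi i \is a character) ->
  n K (\sum_(i | P i) phi i) = \sum_(i | P i) n K (phi i).
Proof.
move=> sKG N_phi.
suff [] : (\sum_(i | P i) phi i) \is a character /\
          n K (\sum_(i | P i) phi i) = \sum_(i | P i) n K (phi i) by [].
apply: (big_rec2 (fun x y => x \is a character /\ n K x = y)).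
  by rewrite rpred0 n_cfun0.
by move=> i x y Pi [N_x <-]; rewrite rpredD ?N_phi // nD ?N_phi.
Qed.

Lemma n_constt_cfInd_cfun1_mul_ge0 (K M : {group gT}) (c : 'CF(K)) (i : Iirr K) :
    K \subset G -> maximal M K -> c \is a linear_char ->
    i \in irr_constt ('Ind[K] (1 : 'CF(M))) ->
  0 <= n K ('chi_i * c).
Proof.
move=> sKG maxM lin_c i_constt.
have [T sTK [eta lin_eta ->]] :=
  cfInd_cfun1_constt_monomial (solvableS sKG solG) maxM i_constt.
have sTG := subset_trans sTK sKG.
have lin_eta_c : eta * 'Res[T] c \is a linear_char by rewrite rpredM ?cfRes_lin_char.
by rewrite -cfIndM // n_cfInd ?lin_charW // n_lin_ge0.
Qed.

Lemma n_le_cfInd_cfRes_maximal (K M : {group gT}) (c : 'CF(K)) :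
    K \subset G -> maximal M K -> c \is a linear_char ->
  n K c <= n K ('Ind[K] ('Res[M] c)).
Proof.
move=> sKG maxM lin_c; have sMK := proper_sub (maxgroupp maxM).
set pi := 'Ind[K] (1 : 'CF(M)).
have N_pi : pi \is a character by rewrite cfInd_char ?cfun1_char.
have N_pi_c i : '[pi, 'chi_i] *: ('chi_i * c) \is a character.
  by rewrite rpredZ_nat ?Cnat_cfdot_char_irr // rpredM ?irr_char ?lin_charW.
have -> : 'Ind[K] ('Res[M] c) = pi * c by rewrite -cfIndM // mul1r.
rewrite (cfun_sum_cfdot pi) mulr_suml.
under eq_bigr => i _ do rewrite -scalerAl.
have pi_1 : '[pi, 'chi_0] = 1.
  by rewrite irr0 -Frobenius_reciprocity cfRes_cfun1 cfnorm1.
rewrite n_sum // (bigD1 0) //= pi_1 irr0 scale1r mul1r lerDl; apply: sumr_ge0 => i _.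
have [k def_k] := natrP (Cnat_cfdot_char_irr i N_pi).
rewrite def_k scaler_nat n_natmul ?rpredM ?irr_char ?lin_charW //.
case: k def_k => [|k] def_k; first by rewrite mulr0n.
apply/mulrn_wge0/(n_constt_cfInd_cfun1_mul_ge0 sKG maxM lin_c).
by rewrite irr_consttE def_k pnatr_eq0.
Qed.

Lemma n_le_cfInd_cfRes (K L : {group gT}) (c : 'CF(K)) :
    K \subset G -> L \subset K -> c \is a linear_char ->
  n K c <= n K ('Ind[K] ('Res[L] c)).
Proof.
elim: {K}_.+1 {-2}K (ltnSn #|K|) c => // m IHm K leKm c sKG sLK lin_c.
have [eqLK | [M maxM sLM]] := maximal_exists sLK.
  by rewrite eqLK cfRes_id cfInd_id.
have [prMK _] := maxgroupP maxM; have sMK := proper_sub prMK.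
have sMG := subset_trans sMK sKG.
have leMm : (#|M| < m)%N := leq_trans (proper_card prMK) leKm.
apply: le_trans (n_le_cfInd_cfRes_maximal sKG maxM lin_c) _.
rewrite (n_cfInd sKG sMK) ?cfRes_char ?lin_charW //.
apply: le_trans (IHm M leMm _ sMG sLM (cfRes_lin_char M lin_c)) _.
by rewrite cfResRes // (n_cfInd sMG sLM) ?(n_cfInd sKG sLK) ?cfRes_char ?lin_charW.
Qed.

End InductionCompatibleFunctional.

Theorem proposition5p2p1 (gT : finGroupType) (G : {group gT})
  (n : forall H : {group gT}, 'CF(H) -> int)
  (solG : solvable G)
  (ACH1 : forall H : {group gT}, H \subset G ->
     forall phi1 phi2 : 'CF(H), phi1 \is a character -> phi2 \is a character ->
     n H (phi1 + phi2) = n H phi1 + n H phi2)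
  (ACH2 : forall H : {group gT}, H \subset G ->
     forall phi : 'CF(H), phi \is a character ->
     n G ('Ind[G] phi) = n H phi)
  (ACH3 : forall H : {group gT}, H \subset G ->
     forall phi : 'CF(H), phi \is a linear_char -> 0 <= n H phi)
  (H : {group gT}) (sHG : H \subset G)
  (chi : 'CF(G)) (chi_lin : chi \is a linear_char)
  (phi : 'CF(H)) (phi_lin : phi \is a linear_char) :
  '['Res[H] chi, phi] * (n G chi)%:~R <= (n G ('Ind[G] phi))%:~R :> algC.
Proof.
have [i def_i] := irrP (lin_char_irr (cfRes_lin_char H chi_lin)).
have [j def_j] := irrP (lin_char_irr phi_lin).
rewrite def_i def_j cfdot_irr; case: eqP => [<- | _].
  by rewrite mul1r -def_i ler_int (n_le_cfInd_cfRes solG ACH1 ACH2 ACH3).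
by rewrite mul0r ler0z ACH2 ?irr_char // -def_j ACH3.
Qed.
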